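(* For $\theta\in(0,1)$ define $P_0(\theta)=1-\theta$, $P_r(\theta)=r(1-\theta)\sum_{i=r}^{\infty}\frac{\theta^i}{i}$ for integers $r\ge1$, and $P(\theta)=\max_{r\ge 0}P_r(\theta)$. Let $E_1(x)=\int_x^\infty \frac{e^{-t}}{t}\,dt$ for $x>0$, let $F(x)=xE_1(x)$, let $\alpha\in(0,\infty)$ be the point where $F$ attains its maximum on $(0,\infty)$ (so $F'(\alpha)=0$), and let $\beta=F(\alpha)$ (numerically $\alpha\approx 0.434818$, $\beta\approx 0.281494$). Then as $\theta\to 1^-$, the optimal strategy approaches the positional strategy rejecting $\frac{\alpha}{1-\theta}$ initial candidates: if $r^*(\theta)$ denotes an index attaining $P(\theta)=P_{r^*(\theta)}(\theta)$, then $(1-\theta)\,r^*(\theta)\to\alpha$, and \[ \lim_{\theta\to 1^-}P(\theta)=\beta. \]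
   Context: Here $P_r(\theta)$ is the limit as $N\to\infty$ of the probability of winning the weighted game of best choice with the $r$-positional strategy: a permutation $\pi$ of $\{1,\dots,N\}$ is drawn with probability proportional to $\theta^{\pi^{-1}(N)-1}$, the player rejects the first $r$ candidates and then accepts the next candidate better than all previous ones, and wins if the accepted candidate has rank $N$ (best). *)

From Stdlib Require Import Reals.
From Coquelicot Require Import Coquelicot.
Open Scope R_scope.

Definition Pr (r : nat) (th : R) : R :=
  match r with
  | O => 1 - th
  | S _ => INR r * (1 - th) * Series (fun k => th ^ (k + r) / INR (k + r))
  end.

(* P(theta) = max_{r >= 0} P_r(theta), taken as the supremum of the values
   (which the theorem also shows is attained). *)
Definition Pmax (th : R) : R := real (Sup_seq (fun r => Pr r th)).

Definition E1 (x : R) : R :=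
  RInt_gen (fun t => exp (- t) / t) (at_point x) (Rbar_locally p_infty).

Definition F (x : R) : R := x * E1 x.

(* With h = - ln th one has th^i / i = h e^(-h i) / (h i), so the series in P_r(th) is a
   Riemann sum of step h for the integral of e^(-t) / t over [h r, oo); as this integrand
   decreases, th F(h r) <= P_r(th) <= (1 - th) th^r + F(h r).  Taking r close to alpha / h
   and using F <= F(alpha) squeezes P(th) between F(alpha) - o(1) and F(alpha) + (1 - th).
   For an optimal r the same bounds force F(h r) -> F(alpha); since F' = E_1 - e^(-x)
   decreases on (0, 1] and is negative beyond 1, F increases strictly up to alpha and
   decreases strictly after it, so h r -> alpha, and (1 - th) / h -> 1. *)

From Stdlib Require Import Reals Lra Lia ZArith.
From Coquelicot Require Import Coquelicot.
Open Scope R_scope.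

Lemma exp_le_compat x y : x <= y -> exp x <= exp y.
Proof. intros [Hxy | ->]; [left; now apply exp_increasing | right; reflexivity]. Qed.

Definition E1_integrand (t : R) : R := exp (- t) / t.

Lemma E1_integrand_pos t : 0 < t -> 0 < E1_integrand t.
Proof. intros Ht. apply Rdiv_lt_0_compat; [apply exp_pos | exact Ht]. Qed.

Lemma E1_integrand_le x y : 0 < x <= y -> E1_integrand y <= E1_integrand x.
Proof.
  intros Hxy. unfold E1_integrand, Rdiv.
  apply Rmult_le_compat.
  - left; apply exp_pos.
  - left; apply Rinv_0_lt_compat; lra.
  - apply exp_le_compat; lra.
  - apply Rinv_le_contravar; lra.
Qed.

Lemma E1_integrand_continuous t : 0 < t -> continuous E1_integrand t.
Proof.
  intros Ht. apply (ex_derive_continuous (V := R_NormedModule)).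
  unfold E1_integrand. auto_derive. lra.
Qed.

Lemma ex_RInt_E1_integrand a b : 0 < a -> 0 < b -> ex_RInt E1_integrand a b.
Proof.
  intros Ha Hb. apply (ex_RInt_continuous (V := R_CompleteNormedModule)).
  intros t Ht. apply E1_integrand_continuous.
  apply Rlt_le_trans with (Rmin a b); [now apply Rmin_glb_lt | apply Ht].
Qed.

Lemma RInt_E1_integrand_step u h : 0 < u -> 0 <= h ->
  h * E1_integrand (u + h) <= RInt E1_integrand u (u + h) <= h * E1_integrand u.
Proof.
  intros Hu Hh.
  assert (Hex : ex_RInt E1_integrand u (u + h)) by (apply ex_RInt_E1_integrand; lra).
  replace (h * E1_integrand (u + h)) with (RInt (fun _ => E1_integrand (u + h)) u (u + h))
    by (rewrite RInt_const; unfold scal; simpl; unfold mult; simpl; ring).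
  replace (h * E1_integrand u) with (RInt (fun _ => E1_integrand u) u (u + h))
    by (rewrite RInt_const; unfold scal; simpl; unfold mult; simpl; ring).
  split; apply RInt_le; try lra; try apply ex_RInt_const; try exact Hex;
    intros t Ht; apply E1_integrand_le; lra.
Qed.

Lemma RInt_E1_integrand_bounds a b : 0 < a <= b ->
  0 <= RInt E1_integrand a b <= exp (- a) / a.
Proof.
  intros Hab.
  assert (Hex : ex_RInt E1_integrand a b) by (apply ex_RInt_E1_integrand; lra).
  split.
  - apply RInt_ge_0; [lra | exact Hex | intros t Ht; left; apply E1_integrand_pos; lra].
  - assert (Hprim : is_RInt (fun t => exp (- t) / a) a b ((exp (- a) - exp (- b)) / a)).
    { replace ((exp (- a) - exp (- b)) / a) with (minus (- exp (- b) / a) (- exp (- a) / a))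
        by (unfold minus, plus, opp; simpl; field; lra).
      apply (is_RInt_derive (fun t => - exp (- t) / a)).
      - intros t _. auto_derive; [lra | field; lra].
      - intros t _. apply (ex_derive_continuous (V := R_NormedModule)). auto_derive. lra. }
    apply Rle_trans with ((exp (- a) - exp (- b)) / a).
    + rewrite <- (is_RInt_unique _ _ _ _ Hprim).
      apply RInt_le; [lra | exact Hex | eexists; exact Hprim |].
      intros t Ht. unfold E1_integrand, Rdiv. apply Rmult_le_compat_l.
      * left; apply exp_pos.
      * apply Rinv_le_contravar; lra.
    + unfold Rdiv. apply Rmult_le_compat_r.
      * left; apply Rinv_0_lt_compat; lra.
      * pose proof (exp_pos (- b)); lra.
Qed.

Lemma is_RInt_gen_p_infty (f : R -> R) (a l : R) :
  (forall b, a < b -> ex_RInt f a b) ->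
  is_lim (fun b => RInt f a b) p_infty l ->
  is_RInt_gen f (at_point a) (Rbar_locally p_infty) l.
Proof.
  intros Hex Hlim P HP.
  destruct (Hlim P HP) as [M HM].
  apply Filter_prod with (fun x => x = a) (fun b => Rmax a M < b).
  - reflexivity.
  - now exists (Rmax a M).
  - intros x b -> Hb. exists (RInt f a b). split.
    + apply (RInt_correct (V := R_CompleteNormedModule)), Hex. pose proof (Rmax_l a M); lra.
    + apply HM. pose proof (Rmax_r a M); lra.
Qed.

Lemma Rabs_RInt_E1_integrand_le u v : 0 < u -> 0 < v ->
  Rabs (RInt E1_integrand u v) <= / Rmin u v.
Proof.
  assert (Hle : forall s t, 0 < s <= t -> Rabs (RInt E1_integrand s t) <= / s).
  { intros s t Hst. destruct (RInt_E1_integrand_bounds s t Hst) as [H0 H1].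
    rewrite Rabs_pos_eq by exact H0. apply Rle_trans with (1 := H1).
    unfold Rdiv. rewrite <- (Rmult_1_l (/ s)) at 2. apply Rmult_le_compat_r.
    - left; apply Rinv_0_lt_compat; lra.
    - rewrite <- exp_0. apply exp_le_compat. lra. }
  intros Hu Hv. destruct (Rle_lt_dec u v) as [Huv | Hvu].
  - rewrite Rmin_left by exact Huv. now apply Hle.
  - rewrite Rmin_right, <- opp_RInt_swap by (try apply ex_RInt_E1_integrand; lra).
    unfold opp; simpl. rewrite Rabs_Ropp. apply Hle. lra.
Qed.

Lemma is_lim_RInt_E1 a : 0 < a -> is_lim (fun b => RInt E1_integrand a b) p_infty (E1 a).
Proof.
  intros Ha.
  assert (Hcauchy : exists l, filterlim (fun b => RInt E1_integrand a b)
                                (Rbar_locally p_infty) (locally l)).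
  { apply (filterlim_locally_cauchy (F := Rbar_locally p_infty)).
    intros eps. pose proof (cond_pos eps) as Heps.
    exists (fun b => Rmax a (/ eps) < b). split; [now exists (Rmax a (/ eps)) |].
    intros u v Hu Hv. pose proof (Rmax_l a (/ eps)). pose proof (Rmax_r a (/ eps)).
    change (Rabs (RInt E1_integrand a v - RInt E1_integrand a u) < eps).
    replace (RInt E1_integrand a v - RInt E1_integrand a u) with (RInt E1_integrand u v).
    2: { rewrite <- (RInt_Chasles (V := R_CompleteNormedModule) E1_integrand a u v)
           by (apply ex_RInt_E1_integrand; lra).
         unfold plus; simpl. lra. }
    apply Rle_lt_trans with (1 := Rabs_RInt_E1_integrand_le u v ltac:(lra) ltac:(lra)).
    rewrite <- (Rinv_inv eps). apply Rinv_lt_contravar.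
    - apply Rmult_lt_0_compat; [now apply Rinv_0_lt_compat | apply Rmin_glb_lt; lra].
    - apply Rmin_glb_lt; lra. }
  destruct Hcauchy as [l Hl].
  replace (E1 a) with l; [exact Hl |].
  symmetry. apply is_RInt_gen_unique, is_RInt_gen_p_infty; [| exact Hl].
  intros b Hb. apply ex_RInt_E1_integrand; lra.
Qed.

Lemma E1_Chasles a b : 0 < a -> 0 < b -> E1 a = RInt E1_integrand a b + E1 b.
Proof.
  intros Ha Hb.
  assert (Hlim : is_lim (fun c => RInt E1_integrand a b + RInt E1_integrand b c) p_infty
                   (RInt E1_integrand a b + E1 b)).
  { apply (is_lim_plus' (fun _ => RInt E1_integrand a b)).
    - apply is_lim_const.
    - now apply is_lim_RInt_E1. }
  apply (is_lim_ext_loc _ (fun c => RInt E1_integrand a c)) in Hlim.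
  - apply is_lim_unique in Hlim. rewrite (is_lim_unique _ _ _ (is_lim_RInt_E1 a Ha)) in Hlim.
    now injection Hlim.
  - exists 0. intros c Hc.
    rewrite <- (RInt_Chasles (V := R_CompleteNormedModule) E1_integrand a b c)
      by (apply ex_RInt_E1_integrand; lra).
    reflexivity.
Qed.

Lemma E1_bounds a : 0 < a -> 0 <= E1 a <= exp (- a) / a.
Proof.
  intros Ha.
  assert (Hle : forall l u : R, (forall c, a <= c -> l <= RInt E1_integrand a c <= u) ->
                  l <= E1 a <= u).
  { intros l u Hlu. split.
    - apply (is_lim_le_loc (fun _ => l) (fun c => RInt E1_integrand a c) p_infty l (E1 a)).
      + exists a. intros c Hc. apply Hlu. lra.
      + apply is_lim_const.
      + now apply is_lim_RInt_E1.
    - apply (is_lim_le_loc (fun c => RInt E1_integrand a c) (fun _ => u) p_infty (E1 a) u).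
      + exists a. intros c Hc. apply Hlu. lra.
      + now apply is_lim_RInt_E1.
      + apply is_lim_const. }
  apply Hle. intros c Hc. apply RInt_E1_integrand_bounds. lra.
Qed.

Lemma RInt_le_E1 a b : 0 < a <= b -> RInt E1_integrand a b <= E1 a.
Proof.
  intros Hab. rewrite (E1_Chasles a b) by lra.
  pose proof (E1_bounds b). lra.
Qed.

Lemma E1_pos a : 0 < a -> 0 < E1 a.
Proof.
  intros Ha.
  pose proof (E1_integrand_pos (a + 1)).
  pose proof (RInt_E1_integrand_step a 1). pose proof (RInt_le_E1 a (a + 1)). lra.
Qed.

Lemma is_derive_E1 x : 0 < x -> is_derive E1 x (- E1_integrand x).
Proof.
  intros Hx.
  assert (Hnear : locally x (fun y => 0 < y)) by exact (open_gt 0 x Hx).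
  apply (is_derive_ext_loc (fun y => RInt E1_integrand y (x + 1) + E1 (x + 1))).
  - revert Hnear. apply filter_imp. intros y Hy. symmetry. apply E1_Chasles; lra.
  - rewrite <- (Rplus_0_r (- E1_integrand x)).
    apply (is_derive_plus (K := R_AbsRing) (V := R_NormedModule));
      [| apply (is_derive_const (K := R_AbsRing) (V := R_NormedModule))].
    apply (is_derive_RInt' (V := R_NormedModule) _ _ _ (x + 1)).
    + revert Hnear. apply filter_imp. intros y Hy.
      apply (RInt_correct (V := R_CompleteNormedModule)), ex_RInt_E1_integrand; lra.
    + now apply E1_integrand_continuous.
Qed.

(* [E1 0] is a junk value (the integral diverges), but it is multiplied by [0]; this lets
   the bounds on [Pr r th] below also cover [r = 0]. *)
Lemma F_0 : F 0 = 0.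
Proof. unfold F. ring. Qed.

Lemma F_pos x : 0 < x -> 0 < F x.
Proof. intros Hx. unfold F. pose proof (E1_pos x Hx). nra. Qed.

Lemma F_le_exp x : 0 <= x -> F x <= exp (- x).
Proof.
  intros [Hx | <-].
  - unfold F. destruct (E1_bounds x Hx) as [_ Hle].
    replace (exp (- x)) with (x * (exp (- x) / x)) by (field; lra).
    now apply Rmult_le_compat_l; [lra |].
  - rewrite F_0. left; apply exp_pos.
Qed.

Lemma is_derive_F x : 0 < x -> is_derive F x (E1 x - exp (- x)).
Proof.
  intros Hx.
  replace (E1 x - exp (- x)) with (1 * E1 x + x * - E1_integrand x)
    by (unfold E1_integrand; field; lra).
  apply (is_derive_mult (fun t => t) E1);
    [apply (is_derive_id (K := R_AbsRing)) | now apply is_derive_E1 |].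
  intros; apply Rmult_comm.
Qed.

Lemma continuous_F x : 0 < x -> continuous F x.
Proof.
  intros Hx. apply (ex_derive_continuous (V := R_NormedModule)).
  eexists. now apply is_derive_F.
Qed.

Lemma lt_of_derive_pos (f df : R -> R) a b : a < b ->
  (forall c, a <= c <= b -> is_derive f c (df c)) ->
  (forall c, a < c < b -> 0 < df c) -> f a < f b.
Proof.
  intros Hab Hder Hpos.
  destruct (MVT_cor2 f df a b Hab) as [c [Hc Hcab]].
  - intros c Hc. now apply is_derive_Reals, Hder.
  - pose proof (Hpos c Hcab). nra.
Qed.

Lemma E1_lt_exp x : 1 < x -> E1 x < exp (- x).
Proof.
  intros Hx. destruct (E1_bounds x ltac:(lra)) as [_ Hle].
  apply Rle_lt_trans with (exp (- x) / x); [exact Hle |].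
  enough (0 < exp (- x) * ((x - 1) / x)) by (replace (exp (- x) / x) with
    (exp (- x) - exp (- x) * ((x - 1) / x)) by (field; lra); lra).
  apply Rmult_lt_0_compat; [apply exp_pos | apply Rdiv_lt_0_compat; lra].
Qed.

(* [E1 x - exp (- x)] is [F'] (see [is_derive_F]); its derivative [exp (- x) - exp (- x) / x]
   is negative on [(0, 1)]. *)
Lemma F'_decreasing x y : 0 < x < y -> y <= 1 -> E1 y - exp (- y) < E1 x - exp (- x).
Proof.
  intros Hxy Hy.
  enough (Hlt : - (E1 x - exp (- x)) < - (E1 y - exp (- y))) by lra.
  apply (lt_of_derive_pos (fun t => - (E1 t - exp (- t))) (fun t => E1_integrand t - exp (- t)));
    [lra | |].
  - intros c Hc. replace (E1_integrand c - exp (- c)) with (- (- E1_integrand c - - exp (- c)))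
      by ring.
    apply (is_derive_opp (K := R_AbsRing) (V := R_NormedModule)).
    apply (is_derive_minus (K := R_AbsRing) (V := R_NormedModule)); [apply is_derive_E1; lra |].
    auto_derive; [exact I | ring].
  - intros c Hc. unfold E1_integrand.
    replace (exp (- c) / c - exp (- c)) with (exp (- c) * ((1 - c) / c)) by (field; lra).
    apply Rmult_lt_0_compat; [apply exp_pos | apply Rdiv_lt_0_compat; lra].
Qed.

Section RiemannSum.

Variables x0 h : R.
Hypothesis x0_pos : 0 < x0.
Hypothesis h_pos : 0 < h.

Local Notation node k := (x0 + h * INR k).
Local Notation term := (fun k : nat => h * E1_integrand (node k)).

Lemma node_pos k : 0 < node k.
Proof. pose proof (pos_INR k). nra. Qed.

Lemma node_S k : node (S k) = node k + h.
Proof. rewrite S_INR. ring. Qed.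

Lemma RInt_le_sum_n n : RInt E1_integrand x0 (node (S n)) <= sum_n term n.
Proof.
  induction n as [| n IHn].
  - rewrite sum_O, node_S. replace (node 0) with x0 by (simpl; ring).
    apply RInt_E1_integrand_step; lra.
  - rewrite sum_Sn, <- (RInt_Chasles (V := R_CompleteNormedModule) _ _ (node (S n)))
      by (apply ex_RInt_E1_integrand; solve [apply node_pos | lra]).
    rewrite (node_S (S n)).
    pose proof (RInt_E1_integrand_step (node (S n)) h (node_pos _) ltac:(lra)).
    set (a := node (S n)) in *. unfold plus; simpl. lra.
Qed.

Lemma sum_n_le_RInt n : sum_n term n <= h * E1_integrand x0 + RInt E1_integrand x0 (node n).
Proof.
  induction n as [| n IHn].
  - rewrite sum_O. replace (node 0) with x0 by (simpl; ring).
    rewrite RInt_point. unfold zero; simpl. lra.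
  - rewrite sum_Sn, <- (RInt_Chasles (V := R_CompleteNormedModule) _ _ (node n))
      by (apply ex_RInt_E1_integrand; solve [apply node_pos | lra]).
    rewrite node_S.
    pose proof (RInt_E1_integrand_step (node n) h (node_pos _) ltac:(lra)).
    set (a := node n) in *. unfold plus; simpl. lra.
Qed.

Lemma sum_n_le_E1 n : sum_n term n <= h * E1_integrand x0 + E1 x0.
Proof.
  pose proof (sum_n_le_RInt n). pose proof (pos_INR n).
  pose proof (RInt_le_E1 x0 (node n) ltac:(nra)). lra.
Qed.

Lemma is_lim_seq_sum_n : is_lim_seq (sum_n term) (Series term).
Proof.
  apply (Series_correct term).
  destruct (ex_finite_lim_seq_incr (sum_n term) (h * E1_integrand x0 + E1 x0)) as [l Hl].
  - intros n. rewrite sum_Sn.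
    pose proof (E1_integrand_pos _ (node_pos (S n))).
    set (a := E1_integrand (node (S n))) in *. unfold plus; simpl. nra.
  - exact sum_n_le_E1.
  - now exists l.
Qed.

Lemma E1_le_Series : E1 x0 <= Series term.
Proof.
  assert (Hnodes : is_lim_seq (fun n => node (S n)) p_infty).
  { apply (is_lim_seq_incr_1 (fun n => node n)).
    apply (is_lim_seq_plus _ _ x0 p_infty); [apply is_lim_seq_const | | reflexivity].
    replace p_infty with (Rbar_mult h p_infty).
    - apply is_lim_seq_scal_l, is_lim_seq_INR.
    - simpl. destruct (Rle_dec 0 h) as [Hh | Hh]; [| lra].
      destruct (Rle_lt_or_eq_dec 0 h Hh); [reflexivity | lra]. }
  change (Rbar_le (E1 x0) (Series term)).
  apply (is_lim_seq_le (fun n => RInt E1_integrand x0 (node (S n))) (sum_n term) (E1 x0));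
    [exact RInt_le_sum_n | | exact is_lim_seq_sum_n].
  apply (is_lim_comp_seq (fun c => RInt E1_integrand x0 c) _ p_infty);
    [| now exists 0%nat | exact Hnodes].
  now apply is_lim_RInt_E1.
Qed.

Lemma Series_le_E1 : Series term <= h * E1_integrand x0 + E1 x0.
Proof.
  change (Rbar_le (Series term) (h * E1_integrand x0 + E1 x0)).
  apply (is_lim_seq_le (sum_n term) (fun _ => h * E1_integrand x0 + E1 x0) (Series term));
    [exact sum_n_le_E1 | exact is_lim_seq_sum_n | apply is_lim_seq_const].
Qed.

End RiemannSum.

Lemma neg_ln_bounds th : 0 < th < 1 -> 1 - th <= - ln th /\ th * - ln th <= 1 - th.
Proof.
  intros Hth.
  assert (Hln : forall y, 0 < y -> ln y <= y - 1).
  { intros y Hy. pose proof (exp_ineq1_le (ln y)) as Hexp. rewrite exp_ln in Hexp; lra. }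
  pose proof (Hln th ltac:(lra)) as H1.
  pose proof (Hln (/ th) ltac:(apply Rinv_0_lt_compat; lra)) as H2.
  rewrite ln_Rinv in H2 by lra.
  split; [lra |].
  apply Rmult_le_reg_r with (/ th); [apply Rinv_0_lt_compat; lra |].
  replace (th * - ln th * / th) with (- ln th) by (field; lra).
  replace ((1 - th) * / th) with (/ th - 1) by (field; lra). lra.
Qed.

Lemma neg_ln_mul_INR_ge0 th r : 0 < th < 1 -> 0 <= - ln th * INR r.
Proof.
  intros Hth. pose proof (neg_ln_bounds th Hth). pose proof (pos_INR r). nra.
Qed.

Lemma pow_eq_exp_ln th n : 0 < th -> th ^ n = exp (- (- ln th * INR n)).
Proof. intros Hth. rewrite <- Rpower_pow by exact Hth. unfold Rpower. f_equal. ring. Qed.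

Lemma Pr_Riemann_sum th r : 0 < th < 1 -> (0 < r)%nat ->
  Pr r th = INR r * (1 - th) *
    Series (fun k => - ln th * E1_integrand (- ln th * INR r + - ln th * INR k)).
Proof.
  intros Hth Hr. destruct r as [| r]; [lia |].
  assert (Hh : 0 < - ln th) by (pose proof (neg_ln_bounds th Hth); lra).
  unfold Pr. f_equal. apply Series_ext. intros k.
  rewrite pow_eq_exp_ln, plus_INR by lra. unfold E1_integrand.
  replace (- ln th * INR (S r) + - ln th * INR k) with (- ln th * (INR k + INR (S r))) by ring.
  assert (0 < INR (S r)) by apply lt_0_INR, Nat.lt_0_succ.
  pose proof (pos_INR k). field. nra.
Qed.

Lemma Pr_ge th r : 0 < th < 1 -> th * F (- ln th * INR r) <= Pr r th.
Proof.
  intros Hth. destruct (neg_ln_bounds th Hth) as [Hh Hthh].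
  destruct r as [| r].
  - rewrite Rmult_0_r, F_0. simpl. lra.
  - rewrite Pr_Riemann_sum by (lra || lia).
    assert (HR : 0 < INR (S r)) by apply lt_0_INR, Nat.lt_0_succ.
    assert (Hx0 : 0 < - ln th * INR (S r)) by nra.
    pose proof (E1_le_Series _ (- ln th) Hx0 ltac:(lra)) as HS.
    pose proof (E1_pos _ Hx0) as HE.
    unfold F. set (e := E1 (- ln th * INR (S r))) in *.
    apply Rle_trans with ((1 - th) * (INR (S r) * e)).
    + replace (th * (- ln th * INR (S r) * e)) with (th * - ln th * (INR (S r) * e)) by ring.
      apply Rmult_le_compat_r; nra.
    + replace ((1 - th) * (INR (S r) * e)) with (INR (S r) * (1 - th) * e) by ring.
      apply Rmult_le_compat_l; nra.
Qed.

Lemma Pr_le th r : 0 < th < 1 -> Pr r th <= (1 - th) * th ^ r + F (- ln th * INR r).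
Proof.
  intros Hth. destruct (neg_ln_bounds th Hth) as [Hh Hthh].
  destruct r as [| r].
  - rewrite Rmult_0_r, F_0. simpl. lra.
  - rewrite Pr_Riemann_sum by (lra || lia).
    assert (HR : 0 < INR (S r)) by apply lt_0_INR, Nat.lt_0_succ.
    set (x0 := - ln th * INR (S r)).
    assert (Hx0 : 0 < x0) by (unfold x0; nra).
    pose proof (Series_le_E1 x0 (- ln th) Hx0 ltac:(lra)) as HS.
    assert (Hpow : INR (S r) * (1 - th) * (- ln th * E1_integrand x0) = (1 - th) * th ^ S r).
    { rewrite pow_eq_exp_ln by lra. unfold E1_integrand, x0. field. nra. }
    pose proof (E1_pos x0 Hx0) as HE.
    apply Rle_trans with (INR (S r) * (1 - th) * (- ln th * E1_integrand x0 + E1 x0)).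
    + apply Rmult_le_compat_l; [nra | exact HS].
    + rewrite Rmult_plus_distr_l, Hpow. apply Rplus_le_compat_l.
      unfold F. replace (x0 * E1 x0) with (INR (S r) * E1 x0 * - ln th) by (unfold x0; ring).
      replace (INR (S r) * (1 - th) * E1 x0) with (INR (S r) * E1 x0 * (1 - th)) by ring.
      apply Rmult_le_compat_l; nra.
Qed.

Lemma Pr_le_2pow th r : 0 < th < 1 -> Pr r th <= 2 * th ^ r.
Proof.
  intros Hth. pose proof (Pr_le th r Hth). destruct (neg_ln_bounds th Hth) as [Hh _].
  pose proof (F_le_exp _ (neg_ln_mul_INR_ge0 th r Hth)) as HF.
  rewrite <- pow_eq_exp_ln in HF by lra.
  pose proof (pow_le th r ltac:(lra)). nra.
Qed.

Lemma ex_argmax_upto (f : nat -> R) N :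
  exists r, (r <= N)%nat /\ forall r', (r' <= N)%nat -> f r' <= f r.
Proof.
  induction N as [| N [r [HrN Hr]]].
  - exists 0%nat. split; [lia |]. intros r' Hr'. replace r' with 0%nat by lia. lra.
  - destruct (Rle_lt_dec (f (S N)) (f r)) as [Hle | Hlt].
    + exists r. split; [lia |]. intros r' Hr'.
      destruct (Nat.eq_dec r' (S N)) as [-> | Hne]; [exact Hle | apply Hr; lia].
    + exists (S N). split; [lia |]. intros r' Hr'.
      destruct (Nat.eq_dec r' (S N)) as [-> | Hne]; [lra |].
      pose proof (Hr r' ltac:(lia)). lra.
Qed.

(* [Pr r th <= 2 th^r] is eventually below the positive value [Pr 1 th]. *)
Lemma ex_argmax_Pr th : 0 < th < 1 -> exists r, forall r', Pr r' th <= Pr r th.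
Proof.
  intros Hth.
  assert (HP1 : 0 < Pr 1 th).
  { destruct (neg_ln_bounds th Hth) as [Hh _].
    pose proof (Pr_ge th 1 Hth). pose proof (F_pos (- ln th * INR 1) ltac:(simpl; lra)). nra. }
  destruct (pow_lt_1_zero th ltac:(rewrite Rabs_right; lra) (Pr 1 th / 2) ltac:(lra)) as [N HN].
  destruct (ex_argmax_upto (fun r => Pr r th) (Nat.max N 1)) as [r [_ Hr]].
  exists r. intros r'. destruct (Nat.le_gt_cases r' (Nat.max N 1)) as [Hle | Hgt]; [now apply Hr |].
  pose proof (Pr_le_2pow th r' Hth). pose proof (Hr 1%nat ltac:(lia)).
  specialize (HN r' ltac:(lia)). rewrite Rabs_right in HN by (apply Rle_ge, pow_le; lra). lra.
Qed.

Lemma Pmax_eq th r : (forall r', Pr r' th <= Pr r th) -> Pmax th = Pr r th.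
Proof.
  intros Hr. unfold Pmax.
  rewrite (is_sup_seq_unique (fun r' => Pr r' th) (Pr r th)); [reflexivity |].
  intros eps. pose proof (cond_pos eps). split.
  - intros r'. simpl. pose proof (Hr r'). lra.
  - exists r. simpl. lra.
Qed.

Definition grid_index (x h : R) : nat := Z.to_nat (up (x / h)).

Lemma grid_index_bounds x h : 0 < x -> 0 < h -> x <= h * INR (grid_index x h) <= x + h.
Proof.
  intros Hx Hh. unfold grid_index.
  destruct (archimed (x / h)) as [Hup1 Hup2].
  assert (Hxh : 0 < x / h) by (apply Rdiv_lt_0_compat; assumption).
  assert (Hpos : (0 < up (x / h))%Z) by (apply lt_IZR; simpl; lra).
  rewrite INR_IZR_INZ, Z2Nat.id by lia.
  assert (Hx_eq : x = h * (x / h)) by (field; lra).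
  set (y := x / h) in *. set (z := IZR (up y)) in *.
  rewrite Hx_eq. split; nra.
Qed.

Lemma filterlim_mult_R {T : Type} {FT : (T -> Prop) -> Prop} {FF : Filter FT}
  (f g : T -> R) (lf lg : R) :
  filterlim f FT (locally lf) -> filterlim g FT (locally lg) ->
  filterlim (fun t => f t * g t) FT (locally (lf * lg)).
Proof.
  intros Hf Hg. apply (filterlim_comp_2 f g Rmult Hf Hg).
  exact (filterlim_Rbar_mult lf lg (lf * lg) eq_refl).
Qed.

Lemma filterlim_plus_R {T : Type} {FT : (T -> Prop) -> Prop} {FF : Filter FT}
  (f g : T -> R) (lf lg : R) :
  filterlim f FT (locally lf) -> filterlim g FT (locally lg) ->
  filterlim (fun t => f t + g t) FT (locally (lf + lg)).
Proof.
  intros Hf Hg. apply (filterlim_comp_2 f g Rplus Hf Hg).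
  exact (filterlim_plus (V := R_NormedModule) lf lg).
Qed.

Lemma at_left_1_in_unit : at_left 1 (fun th => 0 < th < 1).
Proof.
  exists (mkposreal 1 Rlt_0_1). intros th Hball Hlt.
  change (Rabs (th - 1) < 1) in Hball. apply Rabs_lt_between in Hball. lra.
Qed.

Lemma filterlim_at_left_1 (f : R -> R) (l : R) :
  ex_derive f 1 -> f 1 = l -> filterlim f (at_left 1) (locally l).
Proof.
  intros Hf <-.
  apply (filterlim_filter_le_1 _ (filter_le_within (F := locally 1) (fun u => u < 1))).
  now apply (ex_derive_continuous (V := R_NormedModule)).
Qed.

Lemma filterlim_neg_ln : filterlim (fun th => - ln th) (at_left 1) (locally 0).
Proof.
  apply filterlim_at_left_1; [auto_derive; lra | rewrite ln_1; ring].
Qed.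

Lemma filterlim_sub_1_div_neg_ln :
  filterlim (fun th => (1 - th) / - ln th) (at_left 1) (locally 1).
Proof.
  apply (filterlim_le_le (fun th => th) _ (fun _ => 1) (Finite 1)).
  - generalize at_left_1_in_unit. apply filter_imp. intros th Hth.
    destruct (neg_ln_bounds th Hth) as [Hh Hthh].
    split.
    + apply Rmult_le_reg_r with (- ln th); [lra |].
      unfold Rdiv. rewrite Rmult_assoc, Rinv_l by lra. lra.
    + apply Rmult_le_reg_r with (- ln th); [lra |].
      unfold Rdiv. rewrite Rmult_assoc, Rinv_l by lra. lra.
  - apply filterlim_at_left_1; [auto_derive; exact I | reflexivity].
  - apply filterlim_const.
Qed.

Lemma filterlim_grid x : 0 < x ->
  filterlim (fun th => - ln th * INR (grid_index x (- ln th))) (at_left 1) (locally x).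
Proof.
  intros Hx. apply (filterlim_le_le (fun _ => x) _ (fun th => x + - ln th) (Finite x)).
  - generalize at_left_1_in_unit. apply filter_imp. intros th Hth.
    apply grid_index_bounds; [exact Hx |]. pose proof (neg_ln_bounds th Hth). lra.
  - apply filterlim_const.
  - pose proof (filterlim_plus_R _ _ x 0 (filterlim_const x) filterlim_neg_ln) as Hlim.
    rewrite Rplus_0_r in Hlim. exact Hlim.
Qed.

Lemma filterlim_Pr_grid_lower x : 0 < x ->
  filterlim (fun th => th * F (- ln th * INR (grid_index x (- ln th)))) (at_left 1) (locally (F x)).
Proof.
  intros Hx. rewrite <- (Rmult_1_l (F x)).
  apply filterlim_mult_R.
  - apply filterlim_at_left_1; [auto_derive; exact I | reflexivity].
  - eapply filterlim_comp; [exact (filterlim_grid x Hx) | now apply continuous_F].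
Qed.

Section Maximiser.

Variable alpha : R.
Hypothesis alpha_pos : 0 < alpha.
Hypothesis F_max : forall x, 0 < x -> F x <= F alpha.

Lemma F'_alpha_eq_0 : E1 alpha - exp (- alpha) = 0.
Proof.
  pose proof (proj1 (is_derive_Reals _ _ _) (is_derive_F alpha alpha_pos)) as Hd.
  rewrite <- (derive_pt_eq_0 _ _ _ (exist _ _ Hd) Hd).
  apply (deriv_maximum F 0 (alpha + 1)); [exact alpha_pos | lra |].
  intros x Hx _. now apply F_max.
Qed.

Lemma alpha_le_1 : alpha <= 1.
Proof.
  apply Rnot_lt_le. intros H1. pose proof (E1_lt_exp alpha H1). pose proof F'_alpha_eq_0. lra.
Qed.

Lemma F'_pos x : 0 < x < alpha -> 0 < E1 x - exp (- x).
Proof.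
  intros Hx. rewrite <- F'_alpha_eq_0. apply F'_decreasing; [lra | apply alpha_le_1].
Qed.

Lemma F'_neg x : alpha < x -> E1 x - exp (- x) < 0.
Proof.
  intros Hx. destruct (Rle_lt_dec x 1) as [H1 | H1].
  - rewrite <- F'_alpha_eq_0. apply F'_decreasing; lra.
  - pose proof (E1_lt_exp x H1). lra.
Qed.

Lemma F_increasing x y : 0 < x < y -> y <= alpha -> F x < F y.
Proof.
  intros Hxy Hy. apply (lt_of_derive_pos F (fun t => E1 t - exp (- t))); [lra | |].
  - intros c Hc. apply is_derive_F. lra.
  - intros c Hc. apply F'_pos. lra.
Qed.

Lemma F_decreasing x y : alpha <= x < y -> F y < F x.
Proof.
  intros Hxy.
  enough (Hlt : - F x < - F y) by lra.
  apply (lt_of_derive_pos (fun t => - F t) (fun t => - (E1 t - exp (- t)))); [lra | |].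
  - intros c Hc. apply (is_derive_opp (K := R_AbsRing) (V := R_NormedModule)), is_derive_F. lra.
  - intros c Hc. pose proof (F'_neg c ltac:(lra)). lra.
Qed.

Lemma F_le_max x : 0 <= x -> F x <= F alpha.
Proof.
  intros [Hx | <-]; [now apply F_max |].
  rewrite F_0. left; now apply F_pos.
Qed.

Lemma F_off_peak d x : 0 < d < alpha -> 0 <= x -> d <= Rabs (x - alpha) ->
  F x <= Rmax (F (alpha - d)) (F (alpha + d)).
Proof.
  intros Hd Hx Hdist. destruct (Rle_lt_dec x alpha) as [Hle | Hlt].
  - rewrite Rabs_left1 in Hdist by lra.
    apply Rle_trans with (F (alpha - d)); [| apply Rmax_l].
    destruct Hx as [Hx | <-].
    + destruct (Req_dec x (alpha - d)) as [-> | Hne]; [lra |].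
      left; apply F_increasing; lra.
    + rewrite F_0. left; apply F_pos; lra.
  - rewrite Rabs_right in Hdist by lra.
    apply Rle_trans with (F (alpha + d)); [| apply Rmax_r].
    destruct (Req_dec x (alpha + d)) as [-> | Hne]; [lra |].
    left; apply F_decreasing; lra.
Qed.

Lemma filterlim_F_argmax {T : Type} {FT : (T -> Prop) -> Prop} {FF : Filter FT} (x : T -> R) :
  FT (fun t => 0 <= x t) -> filterlim (fun t => F (x t)) FT (locally (F alpha)) ->
  filterlim x FT (locally alpha).
Proof.
  intros Hx HF. apply filterlim_locally. intros eps.
  set (d := Rmin eps (alpha / 2)).
  assert (Hd : 0 < d < alpha /\ d <= eps).
  { pose proof (cond_pos eps). unfold d. repeat split.
    - now apply Rmin_glb_lt; lra.
    - pose proof (Rmin_r eps (alpha / 2)); lra.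
    - apply Rmin_l. }
  set (M := Rmax (F (alpha - d)) (F (alpha + d))).
  assert (Hgap : 0 < F alpha - M).
  { unfold M. apply Rlt_0_minus, Rmax_lub_lt.
    - apply F_increasing; lra.
    - apply F_decreasing; lra. }
  pose proof (proj1 (filterlim_locally _ _) HF (mkposreal _ Hgap)) as Hnear.
  generalize (filter_and _ _ Hx Hnear). apply filter_imp. intros t [Hxt Hball].
  change (Rabs (F (x t) - F alpha) < F alpha - M) in Hball.
  change (Rabs (x t - alpha) < eps).
  destruct (Rlt_le_dec (Rabs (x t - alpha)) d) as [Hclose | Hfar]; [lra |].
  pose proof (F_off_peak d (x t) (proj1 Hd) Hxt Hfar) as Hoff. fold M in Hoff.
  apply Rabs_lt_between in Hball. lra.
Qed.

Let grid_lower th := th * F (- ln th * INR (grid_index alpha (- ln th))).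

Lemma grid_lower_le_Pr th r : 0 < th < 1 -> (forall r', Pr r' th <= Pr r th) ->
  grid_lower th <= Pr r th.
Proof. intros Hth Hr. eapply Rle_trans; [apply Pr_ge; exact Hth | apply Hr]. Qed.

Lemma Pr_sub_le_F th r : 0 < th < 1 -> Pr r th - (1 - th) <= F (- ln th * INR r).
Proof.
  intros Hth. pose proof (Pr_le th r Hth).
  pose proof (pow_le th r ltac:(lra)). pose proof (pow_incr th 1 r ltac:(lra)) as Hpow.
  rewrite pow1 in Hpow. nra.
Qed.

Lemma Pr_le_F_alpha th r : 0 < th < 1 -> Pr r th <= (1 - th) + F alpha.
Proof.
  intros Hth. pose proof (Pr_sub_le_F th r Hth).
  pose proof (F_le_max _ (neg_ln_mul_INR_ge0 th r Hth)). lra.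
Qed.

Lemma filterlim_Pmax : filterlim Pmax (at_left 1) (locally (F alpha)).
Proof.
  apply (filterlim_le_le grid_lower _ (fun th => 1 - th + F alpha) (Finite (F alpha))).
  - generalize at_left_1_in_unit. apply filter_imp. intros th Hth.
    destruct (ex_argmax_Pr th Hth) as [r Hr]. rewrite (Pmax_eq th r Hr).
    split; [now apply grid_lower_le_Pr | now apply Pr_le_F_alpha].
  - now apply filterlim_Pr_grid_lower.
  - apply filterlim_at_left_1; [auto_derive; exact I | ring].
Qed.

Lemma filterlim_neg_ln_mul_argmax (rstar : R -> nat) :
  (forall th, 0 < th < 1 -> forall r, Pr r th <= Pr (rstar th) th) ->
  filterlim (fun th => - ln th * INR (rstar th)) (at_left 1) (locally alpha).
Proof.
  intros Hopt. apply filterlim_F_argmax.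
  - generalize at_left_1_in_unit. apply filter_imp. intros th Hth. now apply neg_ln_mul_INR_ge0.
  - apply (filterlim_le_le (fun th => grid_lower th + (th - 1)) _ (fun _ => F alpha)
             (Finite (F alpha))).
    + generalize at_left_1_in_unit. apply filter_imp. intros th Hth.
      pose proof (grid_lower_le_Pr th (rstar th) Hth (Hopt th Hth)).
      pose proof (Pr_sub_le_F th (rstar th) Hth).
      pose proof (F_le_max _ (neg_ln_mul_INR_ge0 th (rstar th) Hth)). lra.
    + rewrite <- (Rplus_0_r (F alpha)).
      apply filterlim_plus_R; [now apply filterlim_Pr_grid_lower |].
      apply filterlim_at_left_1; [auto_derive; exact I | ring].
    + apply filterlim_const.
Qed.

Lemma filterlim_scaled_argmax (rstar : R -> nat) :
  (forall th, 0 < th < 1 -> forall r, Pr r th <= Pr (rstar th) th) ->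
  filterlim (fun th => (1 - th) * INR (rstar th)) (at_left 1) (locally alpha).
Proof.
  intros Hopt. rewrite <- (Rmult_1_l alpha).
  apply (filterlim_ext_loc (fun th => (1 - th) / - ln th * (- ln th * INR (rstar th)))).
  - generalize at_left_1_in_unit. apply filter_imp. intros th Hth.
    pose proof (neg_ln_bounds th Hth). field. lra.
  - apply filterlim_mult_R;
      [exact filterlim_sub_1_div_neg_ln | now apply filterlim_neg_ln_mul_argmax].
Qed.

End Maximiser.

Theorem theorem3p2 (alpha : R)
  (Halpha : 0 < alpha /\ (forall x, 0 < x -> F x <= F alpha)) :
  (forall th, 0 < th < 1 -> exists r : nat, forall r' : nat, Pr r' th <= Pr r th)
  /\ (forall rstar : R -> nat,
        (forall th, 0 < th < 1 -> forall r : nat, Pr r th <= Pr (rstar th) th) ->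
        filterlim (fun th => (1 - th) * INR (rstar th)) (at_left 1) (locally alpha))
  /\ filterlim Pmax (at_left 1) (locally (F alpha)).
Proof.
  destruct Halpha as [alpha_pos F_max].
  split; [exact ex_argmax_Pr | split].
  - exact (filterlim_scaled_argmax alpha alpha_pos F_max).
  - exact (filterlim_Pmax alpha alpha_pos F_max).
Qed.
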